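(* Let $0\le k\le n$ and $\sigma\in\mathcal D^S_k$. Then $$\sum_{\pi\in S_n,\ dp(\pi)=\sigma}(-1)^{\mathrm{inv}(\pi)}q^{\mathrm{maj}(\pi)}=(-1)^{\mathrm{inv}(\sigma)}q^{\mathrm{maj}(\sigma)}{n\brack k}_q.$$
   Context: $S_n$ is the symmetric group on $[n]$; $\mathcal D^S_k$ is the set of derangements in $S_k$ ($\sigma_i\ne i$ for all $i$), with $\mathcal D^S_0$ consisting of the empty word. $\mathrm{inv}(\sigma)=\#\{(i,j):i<j,\sigma_i>\sigma_j\}$, $\mathrm{maj}(\sigma)=\sum_{i:\sigma_i>\sigma_{i+1}}i$. For a word $w$ of distinct positive integers $a_1<\dots<a_m$, its reduction is obtained by replacing each $a_j$ by $j$. For $\pi\in S_n$, the derangement part $dp(\pi)$ is the reduction of the subword of $\pi$ consisting of the letters $\pi_i$ with $\pi_i\neq i$. $[m]_q=1+q+\dots+q^{m-1}$, $[m]_q!=[1]_q\cdots[m]_q$, $[0]_q!=1$, ${n\brack k}_q=\frac{[n]_q!}{[k]_q![n-k]_q!}$. *)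

From HB Require Import structures.
From mathcomp Require Import all_boot all_order all_fingroup all_algebra.
Set Implicit Arguments. Unset Strict Implicit. Unset Printing Implicit Defensive.
Import GRing.Theory.
Local Open Scope ring_scope.

(* Permutations of [n] are represented by 'S_n = {perm 'I_n}, i.e. values and
   positions are shifted to 0..n-1 (uniform shift by one). *)

Definition inv_perm n (s : 'S_n) : nat :=
  #|[set ij : 'I_n * 'I_n | (ij.1 < ij.2)%N && (s ij.2 < s ij.1)%N]|.

Definition is_derangement n (s : 'S_n) : bool := [forall i, s i != i].

(* reduction of a word of distinct naturals: each letter replaced by its rank
   (0-based, consistent with the shifted encoding) *)
Definition reduction (w : seq nat) : seq nat :=
  [seq count (fun y => (y < x)%N) w | x <- w].

Definition word n (s : 'S_n) : seq nat := [seq val (s i) | i <- enum 'I_n].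

(* maj(s) = sum of 1-based positions i with s_i > s_{i+1};
   with 0-based index i the 1-based position is i+1. *)
Definition maj_perm n (s : 'S_n) : nat :=
  \sum_(0 <= i < n.-1 | (nth 0 (word s) i.+1 < nth 0 (word s) i)%N) i.+1.

Definition dp n (p : 'S_n) : seq nat :=
  reduction [seq val (p i) | i <- enum 'I_n & p i != i].

Definition qint (m : nat) : {poly rat} := \sum_(i < m) 'X^i.
Definition qfact (m : nat) : {poly rat} := \prod_(i < m) qint i.+1.
(* q-binomial [n choose k]_q = [n]_q! / ([k]_q! [n-k]_q!) (exact polynomial division) *)
Definition qbinom (n k : nat) : {poly rat} :=
  qfact n %/ (qfact k * qfact (n - k)).

(* Let [f] be the one-line word of [sigma].  The permutations [p] of [n]
   with derangement part [sigma] correspond to the 0/1 words [w] of length [n]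
   with [k] ones, [w] marking the moved positions: [p] maps the [r]-th one of
   [w] to the [f r]-th one.  Inversions of [p] involving a fixed point [x] come
   in pairs, as many moved letters jump up over [x] as jump down over it, so
   [(-1)^inv p = (-1)^inv sigma].  Whether [i] is a descent of [p] depends
   only on [w_i], [w_(i+1)] and the number of ones before [i], so [maj p] is a
   statistic of [w]; splitting the words by their length and last letter
   gives a two-term recursion whose solution is
   [q^(maj sigma) * [n choose k]_q]. *)

From HB Require Import structures.
From mathcomp Require Import all_boot all_order all_fingroup all_algebra.
From mathcomp Require Import zify ring.

Set Implicit Arguments.
Unset Strict Implicit.
Unset Printing Implicit Defensive.
Import GRing.Theory.

Section QBinomial.
Local Open Scope ring_scope.

Fixpoint qbin (n k : nat) : {poly rat} :=
  match n, k with
  | _, 0 => 1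
  | 0, _.+1 => 0
  | n'.+1, k'.+1 => qbin n' k' + 'X^(k'.+1) * qbin n' k'.+1
  end.

Lemma qbin0 n : qbin n 0 = 1. Proof. by case: n. Qed.

Lemma qbinSS n k : qbin n.+1 k.+1 = qbin n k + 'X^(k.+1) * qbin n k.+1.
Proof. by []. Qed.

Lemma qbin_small n k : (n < k)%N -> qbin n k = 0.
Proof.
elim: n k => [|n IHn] [|k] // lt_nk.
by rewrite qbinSS !IHn ?mulr0 ?addr0 // ltnW.
Qed.

Lemma qbinn n : qbin n n = 1.
Proof. by elim: n => // n IHn; rewrite qbinSS IHn qbin_small ?mulr0 ?addr0. Qed.

Lemma qintD a b : qint (a + b) = qint a + 'X^a * qint b.
Proof.
rewrite /qint big_split_ord /= mulr_sumr; congr (_ + _).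
by apply: eq_bigr => i _; rewrite exprD.
Qed.

Lemma qfact0 : qfact 0 = 1. Proof. by rewrite /qfact big_ord0. Qed.

Lemma qfactS m : qfact m.+1 = qfact m * qint m.+1.
Proof. by rewrite /qfact big_ord_recr. Qed.

Lemma qint_neq0 m : qint m.+1 != 0.
Proof.
apply/eqP => /(congr1 (horner^~ 0)) /eqP.
rewrite /qint horner_sum big_ord_recl /= hornerXn expr0 big1 ?addr0 ?horner0 ?oner_eq0 //.
by move=> i _; rewrite hornerXn expr0n.
Qed.

Lemma qfact_neq0 m : qfact m != 0.
Proof.
elim: m => [|m IHm]; first by rewrite qfact0 oner_eq0.
by rewrite qfactS mulf_neq0 ?qint_neq0.
Qed.

Lemma qbin_qfact n k : (k <= n)%N -> qbin n k * (qfact k * qfact (n - k)) = qfact n.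
Proof.
elim: n k => [|n IHn] [|k] le_kn.
- by rewrite qfact0 !mulr1.
- by [].
- by rewrite qbin0 subn0 qfact0 !mul1r.
rewrite ltnS in le_kn; rewrite subSS qbinSS mulrDl.
have [lt_kn | ge_kn] := ltnP k n; last first.
  have -> : k = n by apply/eqP; rewrite eqn_leq le_kn.
  by rewrite (qbin_small (ltnSn n)) mulr0 mul0r addr0 subnn qfact0 mulr1 qbinn mul1r.
have E1 : qbin n k * (qfact k.+1 * qfact (n - k)) = qfact n * qint k.+1.
  by rewrite -(IHn k (ltnW lt_kn)) qfactS; ring.
have E2 : 'X^(k.+1) * qbin n k.+1 * (qfact k.+1 * qfact (n - k))
          = 'X^(k.+1) * (qfact n * qint (n - k)).
  rewrite -(IHn k.+1 lt_kn) (_ : (n - k = (n - k.+1).+1)%N) ?qfactS; last by lia.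
  by set x := 'X^_; ring.
rewrite E1 E2 qfactS mulrCA -mulrDr -qintD.
by congr (_ * qint _); lia.
Qed.

Lemma qbinomE n k : (k <= n)%N -> qbinom n k = qbin n k.
Proof.
move=> le_kn; rewrite /qbinom -(qbin_qfact le_kn) mulpK //.
by rewrite mulf_neq0 ?qfact_neq0.
Qed.

Lemma qbinSS_dual n k : (k <= n)%N ->
  qbin n.+1 k.+1 = 'X^(n - k) * qbin n k + qbin n k.+1.
Proof.
move=> le_kn.
have nz : qfact k.+1 * qfact (n - k) != 0 by rewrite mulf_neq0 ?qfact_neq0.
apply: (mulIf nz); rewrite -[(n - k)%N]subSS qbin_qfact // subSS mulrDl.
have E1 : 'X^(n - k) * qbin n k * (qfact k.+1 * qfact (n - k))
          = qfact n * ('X^(n - k) * qint k.+1).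
  by rewrite -(qbin_qfact le_kn) qfactS; set x := 'X^_; ring.
have [lt_kn | ge_kn] := ltnP k n; last first.
  rewrite E1; have -> : k = n by apply/eqP; rewrite eqn_leq le_kn.
  by rewrite (qbin_small (ltnSn n)) mul0r addr0 subnn expr0 mul1r qfactS.
have E2 : qbin n k.+1 * (qfact k.+1 * qfact (n - k)) = qfact n * qint (n - k).
  rewrite -(qbin_qfact lt_kn) (_ : (n - k = (n - k.+1).+1)%N) ?qfactS; last by lia.
  by ring.
rewrite E1 E2 qfactS -mulrDr addrC -qintD.
by congr (_ * qint _); lia.
Qed.

End QBinomial.

Lemma count_rcons (w : seq bool) c : count id (rcons w c) = (count id w + c)%N.
Proof. by rewrite -cats1 count_cat /= addn0. Qed.

Lemma count_gt0_last (w : seq bool) : last false w -> (0 < count id w)%N.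
Proof. by case/lastP: w => //= w x; rewrite last_rcons count_rcons => ->; rewrite addn1. Qed.

Lemma count_sum (T : Type) (a : pred T) s : count a s = (\sum_(y <- s) a y)%N.
Proof. by rewrite -sumn_count sumnE big_map. Qed.

Section Ones.
Variable w : seq bool.

Definition ones := [seq i <- iota 0 (size w) | nth false w i].
Definition rank i := count id (take i w).

Lemma sorted_ones : sorted ltn ones.
Proof. by apply: sorted_filter; [exact: ltn_trans | exact: iota_ltn_sorted]. Qed.

Lemma count_nth_iota i : (i <= size w)%N -> count (nth false w) (iota 0 i) = rank i.
Proof. by move=> le_iw; rewrite /rank -(map_nth_iota0 false le_iw) count_map. Qed.

Lemma size_ones : size ones = count id w.
Proof. by rewrite size_filter count_nth_iota // /rank take_size. Qed.

Lemma mem_ones i : (i \in ones) = (i < size w)%N && nth false w i.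
Proof. by rewrite mem_filter mem_iota add0n andbC. Qed.

Lemma ones_nth_iota : ones = map (nth 0 ones) (iota 0 (size ones)).
Proof. by rewrite map_nth_iota0 // take_size. Qed.

Lemma ltn_nth_ones x y : (x < size ones)%N -> (y < size ones)%N ->
  (nth 0 ones x < nth 0 ones y)%N = (x < y)%N.
Proof.
move=> ltx lty; have lt_nth := sorted_ltn_nth ltn_trans 0 sorted_ones.
case: (ltngtP x y) => [xy | yx | ->]; last by rewrite ltnn.
  exact: lt_nth.
by apply/negbTE; rewrite -leqNgt ltnW // lt_nth.
Qed.

Lemma eq_nth_ones x y : (x < size ones)%N -> (y < size ones)%N ->
  (nth 0 ones x == nth 0 ones y) = (x == y).
Proof.
move=> ltx lty; case: (ltngtP x y) => [xy | yx | ->]; last by rewrite !eqxx.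
  by apply/negbTE; rewrite neq_ltn ltn_nth_ones // xy.
by apply/negbTE; rewrite neq_ltn (ltn_nth_ones lty ltx) yx orbT.
Qed.

Lemma rankS i : (i < size w)%N -> rank i.+1 = (rank i + nth false w i)%N.
Proof. by move=> lt_iw; rewrite /rank (take_nth false lt_iw) count_rcons. Qed.

Lemma rank_lt_size_ones i : (i < size w)%N -> nth false w i -> (rank i < size ones)%N.
Proof.
move=> lt_iw wi; rewrite size_ones /rank -{2}(cat_take_drop i w) count_cat.
by rewrite (drop_nth false lt_iw) /= wi addnS ltnS leq_addr.
Qed.

Lemma nth_ones_rank i : (i < size w)%N -> nth false w i -> nth 0 ones (rank i) = i.
Proof.
move=> lt_iw wi; rewrite /ones.
have -> : iota 0 (size w) = iota 0 i ++ i :: iota i.+1 (size w - i.+1).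
  by rewrite -{1}(subnKC lt_iw) -addn1 !iotaD -catA !add0n addn1.
rewrite filter_cat /= wi -count_nth_iota ?(ltnW lt_iw) // -size_filter.
by rewrite nth_cat ltnn subnn.
Qed.

Lemma rank_nth_ones r : (r < size ones)%N -> rank (nth 0 ones r) = r.
Proof.
move=> lt_r; have := mem_nth 0 lt_r; rewrite mem_ones => /andP [lt_w wr].
apply/eqP; rewrite -(eq_nth_ones (rank_lt_size_ones lt_w wr) lt_r).
by rewrite nth_ones_rank.
Qed.

Lemma count_lt_nth_ones t : (t < size ones)%N ->
  count (fun y => y < nth 0 ones t)%N ones = t.
Proof.
move=> lt_t; rewrite [X in count _ X]ones_nth_iota count_map.
rewrite (eq_in_count (a2 := fun r => r < t)%N); last first.
  by move=> r; rewrite mem_iota /= => lt_r; rewrite ltn_nth_ones.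
by rewrite -size_filter (filter_iota_ltn 0 (ltnW lt_t)) size_iota.
Qed.

Lemma nth_ones_count x : x \in ones ->
  nth 0 ones (count (fun y => y < x)%N ones) = x.
Proof.
move=> x_ones.
by rewrite -[in count _ _](nth_index 0 x_ones) count_lt_nth_ones ?index_mem ?nth_index.
Qed.

Lemma ltn_succ_nth_ones i r s : i.+1 \notin ones -> (r < size ones)%N -> (s < size ones)%N ->
  nth 0 ones r = i -> (i.+1 < nth 0 ones s)%N = (r < s)%N.
Proof.
move=> iNones lt_r lt_s ones_r; rewrite -(ltn_nth_ones lt_r lt_s) ones_r ltn_neqAle eq_sym.
by rewrite (memPn iNones) ?mem_nth.
Qed.

Lemma ltn_nth_ones_pred i r s : i \notin ones -> (r < size ones)%N -> (s < size ones)%N ->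
  nth 0 ones r = i.+1 -> (nth 0 ones s < i)%N = (s < r)%N.
Proof.
move=> iNones lt_r lt_s ones_r; rewrite -(ltn_nth_ones lt_s lt_r) ones_r ltnS [in RHS]leq_eqVlt.
by rewrite (negbTE (memPn iNones _ (mem_nth 0 lt_s))).
Qed.

End Ones.

Section InflatedMajor.
Variable f : nat -> nat.

(* [w] marks with [true] the moved positions of a permutation whose moved
   letters form the pattern [f].  At a position with letter [x], next letter
   [c] and [r] moved positions before it, that permutation has a descent iff
   [infl_des2 x c r]. *)
Definition infl_des2 (x c : bool) (r : nat) : bool :=
  match x, c with
  | true, true => (f r.+1 < f r)%N
  | true, false => (r < f r)%N
  | false, true => (f r < r)%N
  | false, false => false
  end.

Definition infl_des (w : seq bool) (i : nat) : bool :=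
  infl_des2 (nth false w i) (nth false w i.+1) (rank w i).

Definition infl_maj (w : seq bool) : nat :=
  \sum_(0 <= i < (size w).-1 | infl_des w i) i.+1.

Lemma infl_maj_rcons w c : infl_maj (rcons w c) =
  (infl_maj w + (if infl_des2 (last false w) c (count id w - last false w)
                 then size w else 0))%N.
Proof.
case/lastP: w => [|w x]; first by rewrite /infl_maj /= !big_geq //; case: ifP.
rewrite /infl_maj !size_rcons /= last_rcons big_mkcond [in RHS]big_mkcond /=.
rewrite big_nat_recr //=; congr (_ + _)%N.
  apply: eq_big_nat => i /andP [_ lt_iw].
  rewrite /infl_des /rank -!cats1 -catA !nth_cat !takel_cat ?(ltnW lt_iw) // lt_iw.
  by case: ltnP => // ge_iw; rewrite (_ : (i.+1 - size w = 0)%N) //; lia.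
rewrite /infl_des /rank -!cats1 -catA !nth_cat takel_cat // take_size ltnn subnn /=.
rewrite ltnNge leqnSn /= count_cat /= addn0 addnK.
by rewrite (_ : ((size w).+1 - size w = 1)%N) ?subnn //; lia.
Qed.

Fixpoint words (L : nat) : seq (seq bool) :=
  if L is L'.+1 then [seq rcons w c | w <- words L', c <- [:: false; true]]
  else [:: [::]].

Lemma mem_words L w : (w \in words L) = (size w == L).
Proof.
elim: L w => [|L IHL] w; first by rewrite inE; case: w.
apply/flatten_mapP/idP => [[w' w'L]|].
  by rewrite !inE => /orP [] /eqP ->; rewrite size_rcons eqSS -IHL.
case/lastP: w => // w c; rewrite size_rcons eqSS -IHL => wL.
by exists w => //; case: c; rewrite !inE eqxx ?orbT.
Qed.

Lemma uniq_words L : uniq (words L).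
Proof.
elim: L => // L IHL.
change (uniq [seq rcons w c | w <- words L, c <- [:: false; true]]).
apply: allpairs_uniq => //.
by move=> [w c] [w' c'] _ _ /= /rcons_inj [-> ->].
Qed.

Lemma big_wordsS (R : nmodType) L (P : pred (seq bool)) (F : seq bool -> R) :
  (\sum_(w <- words L.+1 | P w) F w =
   \sum_(w <- words L | P (rcons w false)) F (rcons w false) +
   \sum_(w <- words L | P (rcons w true)) F (rcons w true))%R.
Proof.
rewrite [words _]/=; elim: (words L) => [|w ws IH] /=; first by rewrite !big_nil addr0.
rewrite !big_cons IH.
case: (P (rcons w false)); case: (P (rcons w true)) => //.
- by rewrite -addrA; congr (_ + _)%R; rewrite addrCA.
- by rewrite addrA.
- by rewrite addrCA.
Qed.

Section Generating.
Local Open Scope ring_scope.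

Definition gen_moved_last L j : {poly rat} :=
  \sum_(w <- words L | (count id w == j) && last false w) 'X^(infl_maj w).
Definition gen_fixed_last L j : {poly rat} :=
  \sum_(w <- words L | (count id w == j) && ~~ last false w) 'X^(infl_maj w).

Lemma gen_moved_lastS L j : gen_moved_last L.+1 j.+1 =
  gen_moved_last L j * 'X^(if (f j < f j.-1)%N then L else 0) +
  gen_fixed_last L j * 'X^(if (f j < j)%N then L else 0).
Proof.
rewrite /gen_moved_last big_wordsS big_pred0 ?add0r; last first.
  by move=> w; rewrite last_rcons andbF.
rewrite (bigID (fun w => last false w)) /= /gen_fixed_last !big_distrl /=.
congr (_ + _); rewrite big_seq_cond [RHS]big_seq_cond; apply: eq_big => w.
- by rewrite last_rcons andbT count_rcons addn1 eqSS.
- rewrite mem_words count_rcons addn1 eqSS => /and3P [/eqP wL /andP [/eqP <- _] lw].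
  rewrite infl_maj_rcons lw exprD wL /=; have := count_gt0_last lw.
  by case: (count id w) => // c _; rewrite subn1.
- by rewrite last_rcons andbT count_rcons addn1 eqSS.
- rewrite mem_words count_rcons addn1 eqSS => /and3P [/eqP wL /andP [/eqP <- _] lw].
  by rewrite infl_maj_rcons (negbTE lw) exprD wL subn0.
Qed.

Lemma gen_fixed_lastS L j : gen_fixed_last L.+1 j =
  gen_moved_last L j * 'X^(if (j.-1 < f j.-1)%N then L else 0) + gen_fixed_last L j.
Proof.
rewrite /gen_fixed_last big_wordsS [X in _ + X]big_pred0 ?addr0; last first.
  by move=> w; rewrite last_rcons andbF.
rewrite (bigID (fun w => last false w)) /= /gen_moved_last !big_distrl /=.
congr (_ + _); rewrite big_seq_cond [RHS]big_seq_cond; apply: eq_big => w.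
- by rewrite last_rcons andbT count_rcons addn0.
- rewrite mem_words count_rcons addn0 => /and3P [/eqP wL /andP [/eqP <- _] lw].
  by rewrite infl_maj_rcons lw exprD wL subn1.
- by rewrite last_rcons andbT count_rcons addn0.
- move=> /and3P [_ _ lw].
  by rewrite infl_maj_rcons (negbTE lw) exprD expr0 mulr1.
Qed.

Lemma gen_moved_last0 L : gen_moved_last L 0 = 0.
Proof.
rewrite /gen_moved_last big_pred0 // => w.
by apply/negbTE/andP => -[/eqP cw0 /count_gt0_last]; rewrite cw0.
Qed.

Lemma gen_fixed_last0 L : gen_fixed_last L 0 = 1.
Proof.
elim: L => [|L IHL]; last by rewrite gen_fixed_lastS gen_moved_last0 mul0r add0r.
by rewrite /gen_fixed_last /= big_cons big_nil /= /infl_maj big_geq // expr0 addr0.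
Qed.

Lemma gen_small L j : (L < j)%N -> gen_moved_last L j = 0 /\ gen_fixed_last L j = 0.
Proof.
move=> lt_Lj; rewrite /gen_moved_last /gen_fixed_last.
split; rewrite big_seq_cond big_pred0 // => w; apply/negbTE.
all: rewrite mem_words; apply/andP => -[/eqP wL /andP [/eqP cw _]].
all: by move: (count_size id w); rewrite cw wL leqNgt lt_Lj.
Qed.

Definition maj_prefix j := (\sum_(0 <= i < j.-1 | (f i.+1 < f i)%N) i.+1)%N.

Lemma maj_prefixSS j :
  maj_prefix j.+2 = (maj_prefix j.+1 + (if (f j.+1 < f j)%N then j.+1 else 0))%N.
Proof. by rewrite /maj_prefix /= big_mkcond big_nat_recr //= -big_mkcond. Qed.

Variable k : nat.
Hypothesis f_neq : forall r, (r < k)%N -> f r != r.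

Let exc r := (r < f r)%N.

Definition moved_last_form m j :=
  'X^(maj_prefix j.+1 + (if exc j then 0 else m)) * qbin (m + j) j.
Definition fixed_last_form m j :=
  'X^(maj_prefix j.+1 + (if exc j then j.+1 else 0)) * qbin (m + j) j.+1.

Lemma moved_last_formS m j : (j.+2 <= k)%N ->
  moved_last_form m j * 'X^(if (f j.+1 < f j)%N then m + j.+1 else 0) +
  fixed_last_form m j * 'X^(if (f j.+1 < j.+1)%N then m + j.+1 else 0)
  = moved_last_form m j.+1.
Proof.
move=> lt_jk; have neq_j := f_neq (ltnW lt_jk); have neq_j1 := f_neq lt_jk.
rewrite /moved_last_form /fixed_last_form /exc maj_prefixSS addnS.
have := qbinSS_dual (leq_addl m j); rewrite addnK => pascal_dual.
move: neq_j neq_j1; set a := f j; set b := f j.+1 => /eqP neq_j /eqP neq_j1.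
rewrite (_ : (b < j.+1)%N = ~~ (j.+1 < b)%N); last by lia.
case: (ltnP j a) => ja; case: (ltnP j.+1 b) => jb; case: (ltnP b a) => ba.
all: try (exfalso; lia).
all: rewrite /= ?addn0 ?expr0 ?mulr1 ?exprD.
all: first [ring | rewrite -qbinSS pascal_dual; ring].
Qed.

Lemma fixed_last_formS m j :
  moved_last_form m j * 'X^(if (j < f j)%N then m + j.+1 else 0) +
  fixed_last_form m j = fixed_last_form m.+1 j.
Proof.
rewrite /moved_last_form /fixed_last_form /exc addSn qbinSS_dual ?leq_addl // addnK.
by case: (j < f j)%N; rewrite /= ?addn0 ?expr0 ?mulr1 ?exprD; ring.
Qed.

Lemma gen_fixed_last_closed j :
  (forall m, gen_moved_last (m + j.+1) j.+1 = moved_last_form m j) ->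
  forall m, gen_fixed_last (m + j.+1) j.+1 = fixed_last_form m j.
Proof.
move=> moved; elim=> [|m IHm].
  rewrite add0n gen_fixed_lastS; have [-> ->] := gen_small (ltnSn j).
  by rewrite /fixed_last_form add0n qbin_small // mul0r mulr0 addr0.
by rewrite addSn gen_fixed_lastS moved IHm fixed_last_formS.
Qed.

Lemma gen_last_closed j : (j < k)%N -> forall m,
  gen_moved_last (m + j.+1) j.+1 = moved_last_form m j /\
  gen_fixed_last (m + j.+1) j.+1 = fixed_last_form m j.
Proof.
elim: j => [|j IHj] lt_jk.
  have moved m : gen_moved_last (m + 1) 1 = moved_last_form m 0.
    have exc0 : exc 0 by rewrite /exc lt0n f_neq.
    rewrite addn1 gen_moved_lastS gen_moved_last0 gen_fixed_last0 mul0r add0r mul1r.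
    by rewrite ltn0 /moved_last_form exc0 qbin0 mulr1 /maj_prefix big_geq.
  by move=> m; split; last exact: gen_fixed_last_closed.
have moved m : gen_moved_last (m + j.+2) j.+2 = moved_last_form m j.+1.
  have [IHmoved IHfixed] := IHj (ltnW lt_jk) m.
  by rewrite addnS gen_moved_lastS /= IHmoved IHfixed moved_last_formS.
by move=> m; split; last exact: gen_fixed_last_closed.
Qed.

Lemma sum_words_infl_maj n j : (j <= k)%N -> (j <= n)%N ->
  \sum_(w <- words n | count id w == j) 'X^(infl_maj w) = 'X^(maj_prefix j) * qbin n j.
Proof.
move=> le_jk le_jn; rewrite (bigID (fun w => last false w)) /=.
change (gen_moved_last n j + gen_fixed_last n j = 'X^(maj_prefix j) * qbin n j).
case: j le_jk le_jn => [|j] lt_jk lt_jn.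
  by rewrite gen_moved_last0 gen_fixed_last0 add0r qbin0 mulr1 /maj_prefix big_geq // expr0.
have [m ->] : exists m, n = (m + j.+1)%N by exists (n - j.+1)%N; rewrite subnK.
have [-> ->] := gen_last_closed lt_jk m.
rewrite /moved_last_form /fixed_last_form addnS.
have := qbinSS_dual (leq_addl m j); rewrite addnK => pascal_dual.
by case: (exc j); rewrite ?addn0 exprD; [rewrite qbinSS | rewrite pascal_dual]; ring.
Qed.

End Generating.
End InflatedMajor.

Lemma size_word m (s : 'S_m) : size (word s) = m.
Proof. by rewrite size_map size_enum_ord. Qed.

Lemma nth_word m (s : 'S_m) (i : 'I_m) : nth 0 (word s) i = s i.
Proof. by rewrite (nth_map i) ?size_enum_ord // nth_ord_enum. Qed.

Lemma perm_eq_word m (s : 'S_m) : perm_eq (word s) (iota 0 m).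
Proof.
apply: uniq_perm.
- by rewrite map_inj_uniq ?enum_uniq // => i j /val_inj /perm_inj.
- exact: iota_uniq.
move=> x; rewrite mem_iota add0n; apply/mapP/idP; first by case=> i _ ->; exact: ltn_ord.
by move=> lt_xm; exists ((s^-1)%g (Ordinal lt_xm)); rewrite ?mem_enum ?permKV.
Qed.

Definition inv_ind (v : nat -> nat) i j : nat := ((i < j) && (v j < v i))%N.

Lemma inv_perm_sum m (s : 'S_m) : inv_perm s =
  (\sum_(i <- iota 0 m) \sum_(j <- iota 0 m) inv_ind (nth 0 (word s)) i j)%N.
Proof.
rewrite /inv_perm -sum1_card big_mkcond /=.
rewrite (eq_bigr (fun ij : 'I_m * 'I_m => ((ij.1 < ij.2)%N && (s ij.2 < s ij.1)%N : nat)));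
  last by move=> ij _; rewrite in_set; case: ifP.
rewrite -(pair_bigA _ (fun (i j : 'I_m) => ((i < j)%N && (s j < s i)%N : nat))) /=.
rewrite -val_enum_ord big_map /= [in RHS]big_enum /=.
apply: eq_bigr => i _; rewrite big_map big_enum /=; apply: eq_bigr => j _.
by rewrite /inv_ind !nth_word.
Qed.

Definition moved_word n (p : 'S_n) : seq bool := [seq p i != i | i <- enum 'I_n].

Lemma size_moved_word n (p : 'S_n) : size (moved_word p) = n.
Proof. by rewrite size_map size_enum_ord. Qed.

Lemma nth_moved_word n (p : 'S_n) (i : 'I_n) : nth false (moved_word p) i = (p i != i).
Proof. by rewrite (nth_map i) ?size_enum_ord // nth_ord_enum. Qed.

Lemma ones_moved_word n (p : 'S_n) :
  ones (moved_word p) = [seq val i | i <- enum 'I_n & p i != i].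
Proof.
rewrite /ones size_moved_word -val_enum_ord filter_map; congr map.
by apply: eq_filter => i; rewrite /= nth_moved_word.
Qed.

Lemma perm_eq_moved_values n (p : 'S_n) :
  perm_eq [seq p i | i <- enum 'I_n & p i != i] [seq i <- enum 'I_n | p i != i].
Proof.
set N := [seq i <- enum 'I_n | p i != i].
have uniqN : uniq N by rewrite filter_uniq // enum_uniq.
have uniq_pN : uniq (map p N) by rewrite map_inj_uniq //; exact: perm_inj.
have sub_pN : {subset map p N <= N}.
  move=> x /mapP [i]; rewrite mem_filter => /andP [pi_i _] ->.
  rewrite mem_filter mem_enum andbT; apply: contra pi_i => /eqP ppi.
  by apply/eqP; apply: perm_inj ppi.
have [_ ] := uniq_min_size uniq_pN sub_pN (eq_leq (esym (size_map p N))).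
exact: uniq_perm.
Qed.

Lemma count_cross_up_down (s : seq nat) (v : nat -> nat) x :
  perm_eq (map v s) s -> x \notin s ->
  count (fun a => (a < x) && (x < v a))%N s = count (fun a => (x < a) && (v a < x))%N s.
Proof.
move=> perm_vs xNs; apply: (@addIn (count (fun a => a < x)%N s)).
rewrite -[in LHS](seq.permP perm_vs (fun a => a < x)%N) count_map !count_sum -!big_split.
apply: eq_big_seq => a sa /=.
have ax : a != x by apply: contraNneq xNs => <-.
have vax : v a != x by apply: contraNneq xNs => <-; rewrite -(perm_mem perm_vs) map_f.
by case: ltngtP ax => // _; case: ltngtP vax => // _.
Qed.

Section Inflation.
Variables (n k : nat) (sigma : 'S_k).
Hypothesis sigma_der : is_derangement sigma.

Let f := nth 0 (word sigma).

Lemma f_ord r (lt_rk : (r < k)%N) : f r = sigma (Ordinal lt_rk).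
Proof. exact: (nth_word sigma (Ordinal lt_rk)). Qed.

Lemma f_lt r : (r < k)%N -> (f r < k)%N.
Proof. by move=> lt_rk; rewrite (f_ord lt_rk) ltn_ord. Qed.

Lemma f_neq r : (r < k)%N -> f r != r.
Proof.
move=> lt_rk; rewrite (f_ord lt_rk); move/forallP: sigma_der => /(_ (Ordinal lt_rk)).
by apply: contra => /eqP fr; apply/eqP/val_inj.
Qed.

Lemma f_inj r s : (r < k)%N -> (s < k)%N -> f r = f s -> r = s.
Proof.
by move=> lt_r lt_s; rewrite (f_ord lt_r) (f_ord lt_s) => /val_inj /perm_inj /(congr1 val).
Qed.

Lemma word_f : word sigma = map f (iota 0 k).
Proof. by rewrite map_nth_iota0 ?size_word // take_oversize ?size_word. Qed.

(* [p] arises from [sigma] by inserting fixed points at the letters [false]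
   of [w]. *)
Definition inflation_of (w : seq bool) (p : 'S_n) :=
  [/\ size w = n, count id w = k,
      forall i : 'I_n, nth false w i = (p i != i) &
      forall i : 'I_n, nth false w i -> val (p i) = nth 0 (ones w) (f (rank w i))].

Lemma ones_map_f w : count id w = k ->
  [seq nth 0 (ones w) (f (rank w x)) | x <- ones w] = map (nth 0 (ones w)) (word sigma).
Proof.
move=> cw; rewrite [X in map _ X = _]ones_nth_iota -map_comp word_f -map_comp size_ones cw.
by apply/eq_in_map => r; rewrite mem_iota => lt_r /=; rewrite rank_nth_ones // size_ones cw.
Qed.

Lemma perm_eq_ones_word w : count id w = k ->
  perm_eq (map (nth 0 (ones w)) (word sigma)) (ones w).
Proof.
move=> cw; rewrite [X in perm_eq _ X]ones_nth_iota size_ones cw.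
exact/perm_map/perm_eq_word.
Qed.

Lemma inflation_moved_word w p : inflation_of w p -> moved_word p = w.
Proof.
case=> size_w _ wE _; apply: (@eq_from_nth _ false); first by rewrite size_moved_word.
move=> i; rewrite size_moved_word => lt_in.
by rewrite -[i]/(val (Ordinal lt_in)) nth_moved_word wE.
Qed.

Lemma inflation_values w p : inflation_of w p ->
  [seq val (p i) | i <- enum 'I_n & p i != i] = map (nth 0 (ones w)) (word sigma).
Proof.
move=> infl; have [_ cw wE pE] := infl.
have onesE : ones w = [seq val i | i <- enum 'I_n & p i != i].
  by rewrite -ones_moved_word (inflation_moved_word infl).
rewrite -ones_map_f // [X in _ = map _ X]onesE -map_comp.
by apply/eq_in_map => i; rewrite mem_filter => /andP [moved_i _] /=; rewrite pE // wE.
Qed.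

Lemma inflation_dp w p : inflation_of w p -> dp p = word sigma.
Proof.
move=> infl; have [_ cw _ _] := infl.
rewrite /dp /reduction (inflation_values infl) -map_comp -[RHS]map_id.
apply/eq_in_map => y y_word /=; rewrite (seq.permP (perm_eq_ones_word cw)).
rewrite count_lt_nth_ones // size_ones cw.
by move: y_word; rewrite (perm_mem (perm_eq_word sigma)) mem_iota.
Qed.

Lemma dp_inflation p : dp p = word sigma -> inflation_of (moved_word p) p.
Proof.
move=> dpE; set w := moved_word p.
set N := [seq i <- enum 'I_n | p i != i].
set u := [seq val (p i) | i <- N].
have NE : map val N = ones w by rewrite ones_moved_word.
have perm_u : perm_eq u (ones w).
  by rewrite -NE /u (map_comp val p); apply/perm_map/perm_eq_moved_values.
have dpu : dp p = [seq count (fun y => y < x)%N (ones w) | x <- u].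
  by apply/eq_in_map => x _; exact: (seq.permP perm_u).
have size_u : size u = size (ones w) := perm_size perm_u.
have cw : count id w = k.
  by rewrite -size_ones -size_u -(size_word sigma) -dpE dpu size_map.
split=> //; [exact: size_moved_word | exact: nth_moved_word |].
move=> i; rewrite nth_moved_word => moved_i.
have lt_r : (rank w i < size (ones w))%N.
  by apply: rank_lt_size_ones; rewrite ?size_moved_word ?nth_moved_word.
have size_N : size N = size (ones w) by rewrite -NE size_map.
have N_r : nth i N (rank w i) = i.
  apply: val_inj; rewrite /= -(nth_map i 0 val) ?size_N // NE.
  by rewrite nth_ones_rank ?size_moved_word ?nth_moved_word.
have u_r : nth 0 u (rank w i) = p i by rewrite (nth_map i) ?N_r ?size_N.
have f_r : f (rank w i) = count (fun y => y < p i)%N (ones w).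
  by rewrite /f -dpE dpu (nth_map 0) ?u_r ?size_u.
by rewrite f_r nth_ones_count // -(perm_mem perm_u) -u_r mem_nth ?size_u.
Qed.

Lemma inflation_inj w p p' : inflation_of w p -> inflation_of w p' -> p = p'.
Proof.
case=> _ _ wE pE [_ _ wE' pE']; apply/permP => i.
case wi : (nth false w i); first by apply: val_inj; rewrite pE // pE'.
by move: (wE i) (wE' i); rewrite wi => /esym/negbFE/eqP -> /esym/negbFE/eqP ->.
Qed.

Section Construction.
Variable w : seq bool.
Hypotheses (size_w : size w = n) (count_w : count id w = k).

Let target (i : 'I_n) := nth 0 (ones w) (f (rank w i)).

Lemma rank_lt_moved (i : 'I_n) : nth false w i -> (rank w i < k)%N.
Proof. by move=> wi; rewrite -count_w -size_ones rank_lt_size_ones ?size_w. Qed.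

Lemma target_ones (i : 'I_n) : nth false w i -> target i \in ones w.
Proof. by move=> wi; rewrite mem_nth // size_ones count_w f_lt ?rank_lt_moved. Qed.

Definition infl_fun (i : 'I_n) : 'I_n :=
  if nth false w i then insubd i (target i) else i.

Lemma val_infl_fun_moved (i : 'I_n) : nth false w i -> val (infl_fun i) = target i.
Proof.
move=> wi; rewrite /infl_fun wi val_insubd.
by have := target_ones wi; rewrite mem_ones size_w => /andP [->].
Qed.

Lemma infl_fun_fixed (i : 'I_n) : ~~ nth false w i -> infl_fun i = i.
Proof. by rewrite /infl_fun => /negbTE ->. Qed.

Lemma target_inj (i j : 'I_n) : nth false w i -> nth false w j -> target i = target j -> i = j.
Proof.
move=> wi wj /eqP; rewrite eq_nth_ones ?size_ones ?count_w ?f_lt ?rank_lt_moved //.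
move=> /eqP /f_inj eq_rank; apply: val_inj.
rewrite /= -(nth_ones_rank (w := w) (i := i)) ?size_w //.
by rewrite -(nth_ones_rank (w := w) (i := j)) ?size_w // eq_rank ?rank_lt_moved.
Qed.

Lemma infl_fun_inj : injective infl_fun.
Proof.
move=> i j; case wi : (nth false w i); case wj : (nth false w j).
- by move/(congr1 val); rewrite !val_infl_fun_moved //; exact: target_inj.
- rewrite [infl_fun j]infl_fun_fixed ?wj // => /(congr1 val).
  by rewrite val_infl_fun_moved // => ij; have := target_ones wi; rewrite ij mem_ones wj andbF.
- rewrite [infl_fun i]infl_fun_fixed ?wi // => /(congr1 val).
  by rewrite val_infl_fun_moved // => ij; have := target_ones wj; rewrite -ij mem_ones wi andbF.
- by rewrite !infl_fun_fixed ?wi ?wj.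
Qed.

Lemma inflation_of_infl_fun : inflation_of w (perm infl_fun_inj).
Proof.
split=> // i; rewrite permE; last exact: val_infl_fun_moved.
case wi : (nth false w i); last by rewrite infl_fun_fixed ?wi ?eqxx.
apply/esym/negP => /eqP /(congr1 val); rewrite val_infl_fun_moved // => fix_i.
have := f_neq (rank_lt_moved wi).
rewrite -(eq_nth_ones (w := w)) ?size_ones ?count_w ?f_lt ?rank_lt_moved // -/(target i) fix_i.
by rewrite nth_ones_rank ?size_w // eqxx.
Qed.

End Construction.

Section InflationStatistics.
Variables (w : seq bool) (p : 'S_n).
Hypothesis infl : inflation_of w p.

Let v := nth 0 (word p).

Lemma size_ones_inflation : size (ones w) = k.
Proof. by have [_ cw _ _] := infl; rewrite size_ones. Qed.

Lemma inflation_fixed x : (x < n)%N -> ~~ nth false w x -> v x = x.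
Proof.
have [_ _ wE _] := infl; move=> lt_xn wx.
rewrite -[x]/(val (Ordinal lt_xn)) /v nth_word; congr val; apply/eqP/negbFE.
by rewrite -wE (negbTE wx).
Qed.

Lemma inflation_moved x : x \in ones w -> v x = nth 0 (ones w) (f (rank w x)).
Proof.
have [size_w _ _ pE] := infl; rewrite mem_ones size_w => /andP [lt_xn wx].
by rewrite -[x]/(val (Ordinal lt_xn)) /v nth_word pE.
Qed.

Lemma rank_lt_inflation x : (x < size w)%N -> nth false w x -> (rank w x < k)%N.
Proof. by move=> lt_xw wx; rewrite -size_ones_inflation rank_lt_size_ones. Qed.

Lemma inflation_descent i : (i.+1 < n)%N -> (v i.+1 < v i)%N = infl_des f w i.
Proof.
have [size_w _ _ _] := infl; move=> lt_i1n; have lt_in := ltnW lt_i1n.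
have lt_iw : (i < size w)%N by rewrite size_w.
have lt_i1w : (i.+1 < size w)%N by rewrite size_w.
have lt_f r : (r < k)%N -> (f r < size (ones w))%N by rewrite size_ones_inflation; exact: f_lt.
rewrite /infl_des; have := rankS lt_iw.
case wi : (nth false w i); case wi1 : (nth false w i.+1) => rank_i1 /=.
- rewrite addn1 in rank_i1.
  rewrite !inflation_moved ?mem_ones ?lt_iw ?lt_i1w ?wi ?wi1 // rank_i1.
  by rewrite ltn_nth_ones ?lt_f ?rank_lt_inflation // -rank_i1 rank_lt_inflation.
- rewrite (inflation_fixed lt_i1n) ?wi1 // inflation_moved ?mem_ones ?lt_iw ?wi //.
  apply: ltn_succ_nth_ones; rewrite ?mem_ones ?wi1 ?andbF ?lt_f ?rank_lt_inflation //.
    by rewrite size_ones_inflation rank_lt_inflation.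
  exact: nth_ones_rank.
- rewrite (inflation_fixed lt_in) ?wi // inflation_moved ?mem_ones ?lt_i1w ?wi1 //.
  rewrite addn0 in rank_i1; rewrite rank_i1; apply: ltn_nth_ones_pred.
  + by rewrite mem_ones wi andbF.
  + by rewrite -rank_i1 size_ones_inflation rank_lt_inflation.
  + by rewrite lt_f // -rank_i1 rank_lt_inflation.
  + by rewrite -rank_i1 nth_ones_rank.
- by rewrite !inflation_fixed ?wi ?wi1 // ltnNge leqnSn.
Qed.

Lemma inflation_maj : maj_perm p = infl_maj f w.
Proof.
have [size_w _ _ _] := infl.
rewrite /maj_perm /infl_maj size_w big_mkcond [RHS]big_mkcond.
apply: eq_big_nat => i /andP [_ lt_i].
by rewrite -/v inflation_descent // -ltn_predRL.
Qed.

Lemma perm_eq_inflation_moved : perm_eq (map v (ones w)) (ones w).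
Proof.
have [_ cw _ _] := infl.
have -> : map v (ones w) = [seq nth 0 (ones w) (f (rank w x)) | x <- ones w].
  by apply/eq_in_map => x; exact: inflation_moved.
by rewrite ones_map_f // perm_eq_ones_word.
Qed.

Let Q := filter (predC (nth false w)) (iota 0 n).

Lemma mem_inflation_Q x : x \in Q -> (x < n)%N /\ ~~ nth false w x.
Proof. by rewrite mem_filter mem_iota add0n => /andP []. Qed.

Lemma inv_perm_blocks : inv_perm p =
  (\sum_(i <- ones w) \sum_(j <- ones w) inv_ind v i j +
   (\sum_(i <- ones w) \sum_(j <- Q) inv_ind v i j +
    \sum_(i <- Q) \sum_(j <- ones w) inv_ind v i j) +
   \sum_(i <- Q) \sum_(j <- Q) inv_ind v i j)%N.
Proof.
have [size_w _ _ _] := infl.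
have split_sum (G : nat -> nat) :
    (\sum_(i <- iota 0 n) G i = \sum_(i <- ones w) G i + \sum_(i <- Q) G i)%N.
  by rewrite -big_cat /ones size_w; apply: perm_big; rewrite perm_sym /Q perm_filterC.
rewrite inv_perm_sum -/v; under eq_bigr do rewrite split_sum.
by rewrite split_sum !big_split /=; lia.
Qed.

Lemma inflation_inv_moved :
  (\sum_(i <- ones w) \sum_(j <- ones w) inv_ind v i j)%N = inv_perm sigma.
Proof.
rewrite inv_perm_sum -/f ones_nth_iota size_ones_inflation big_map.
apply: eq_big_seq => r; rewrite mem_iota => lt_r; rewrite big_map.
apply: eq_big_seq => s; rewrite mem_iota => lt_s.
have lt_ones t : (t < k)%N -> (t < size (ones w))%N by rewrite size_ones_inflation.
rewrite /inv_ind !inflation_moved ?mem_nth ?lt_ones //.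
by rewrite !rank_nth_ones ?lt_ones // !ltn_nth_ones ?lt_ones ?f_lt.
Qed.

Lemma inflation_inv_fixed : (\sum_(i <- Q) \sum_(j <- Q) inv_ind v i j)%N = 0%N.
Proof.
rewrite big_seq; apply: big1 => i /mem_inflation_Q [lt_in wi].
rewrite big_seq; apply: big1 => j /mem_inflation_Q [lt_jn wj].
by rewrite /inv_ind !inflation_fixed //; case: ltngtP.
Qed.

Lemma inflation_inv_mixed :
  (\sum_(i <- ones w) \sum_(j <- Q) inv_ind v i j +
   \sum_(i <- Q) \sum_(j <- ones w) inv_ind v i j)%N =
  (\sum_(x <- Q) count (fun a => (a < x) && (x < v a))%N (ones w)).*2.
Proof.
rewrite exchange_big -big_split -mul2n big_distrr /=.
apply: eq_big_seq => x /mem_inflation_Q [lt_xn wx].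
rewrite /inv_ind inflation_fixed // -!count_sum mul2n -addnn; congr (_ + _)%N.
by rewrite (count_cross_up_down perm_eq_inflation_moved) // mem_ones negb_and wx orbT.
Qed.

Lemma inflation_inv_odd : odd (inv_perm p) = odd (inv_perm sigma).
Proof.
rewrite inv_perm_blocks inflation_inv_moved inflation_inv_mixed inflation_inv_fixed.
by rewrite addn0 oddD odd_double addbF.
Qed.

End InflationStatistics.
End Inflation.

Lemma perm_eq_moved_words n k (sigma : 'S_k) : is_derangement sigma ->
  perm_eq [seq moved_word p | p <- index_enum 'S_n & dp p == word sigma]
          [seq w <- words n | count id w == k].
Proof.
move=> sigma_der; apply: uniq_perm.
- rewrite map_inj_in_uniq ?filter_uniq ?index_enum_uniq // => p p'.
  rewrite !mem_filter => /andP [/eqP /dp_inflation infl _] /andP [/eqP /dp_inflation infl' _].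
  by move=> eq_w; rewrite eq_w in infl; exact: inflation_inj infl infl'.
- by rewrite filter_uniq ?uniq_words.
move=> w; rewrite mem_filter mem_words; apply/mapP/idP.
  case=> p; rewrite mem_filter => /andP [/eqP /dp_inflation [size_w cw _ _] _] ->.
  by rewrite cw size_w !eqxx.
case/andP => /eqP cw /eqP size_w.
have infl := inflation_of_infl_fun sigma_der size_w cw.
exists (perm (infl_fun_inj (sigma := sigma) size_w cw)).
  by rewrite mem_filter mem_index_enum andbT (inflation_dp infl).
by rewrite (inflation_moved_word infl).
Qed.

Local Open Scope ring_scope.

Theorem proposition2p6 (n k : nat) (sigma : 'S_k) :
  (k <= n)%N -> is_derangement sigma ->
  \sum_(p : 'S_n | dp p == word sigma)
      (-1) ^+ inv_perm p * 'X^(maj_perm p)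
  = (-1) ^+ inv_perm sigma * 'X^(maj_perm sigma) * qbinom n k :> {poly rat}.
Proof.
move=> le_kn sigma_der; set f := nth 0%N (word sigma).
rewrite (eq_bigr (fun p => (-1) ^+ inv_perm sigma * 'X^(infl_maj f (moved_word p)))); last first.
  move=> p /eqP /dp_inflation infl.
  by rewrite -signr_odd (inflation_inv_odd sigma_der infl) signr_odd (inflation_maj infl).
rewrite -big_distrr -mulrA; congr (_ * _).
rewrite -big_filter -(big_map (@moved_word n) xpredT (fun w => 'X^(infl_maj f w))).
rewrite (perm_big _ (perm_eq_moved_words n sigma_der)) big_filter qbinomE //.
exact: (sum_words_infl_maj (f_neq sigma_der)).
Qed.
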